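(* Let $\mathbf{A}\in\mathbb{C}^{M\times N_a}$ and $\mathbf{B}\in\mathbb{C}^{M\times N_b}$ have unit-$\ell_2$-norm columns, let $\mathbf{D}=[\mathbf{A}\ \mathbf{B}]$, with coherence parameters $\mu_a,\mu_b,\mu_m$ and $\mu_d=\max\{\mu_a,\mu_b,\mu_m\}$, and assume $\mu_b\le\mu_a$. Let $\mathbf{z}=\mathbf{D}\mathbf{w}+\mathbf{n}$ with $\mathbf{w}=[\mathbf{x}^T\ \mathbf{e}^T]^T\in\mathbb{C}^{N_a+N_b}$ and $\|\mathbf{n}\|_2\le\varepsilon$. Let $w\ge1$ be an integer and $\mathcal{W}=\mathrm{supp}_w(\mathbf{w})$. If $$w<\max\left\{\frac{2(1+\mu_a)}{\mu_a+2\mu_d+\sqrt{\mu_a^2+\mu_m^2}},\ \frac{1+\mu_d}{2\mu_d}\right\},$$ then for any $\eta\ge\varepsilon$ every solution $\hat{\mathbf{w}}$ of $$\text{minimize }\|\tilde{\mathbf{w}}\|_1\ \text{ subject to }\ \|\mathbf{z}-\mathbf{D}\tilde{\mathbf{w}}\|_2\le\eta$$ satisfies $$\|\mathbf{w}-\hat{\mathbf{w}}\|_2\le C_7(\varepsilon+\eta)+C_8\|\mathbf{w}-\mathbf{w}_{\mathcal{W}}\|_1,$$ where $C_7,C_8\ge0$ depend only on $\mu_a,\mu_b,\mu_m,\mu_d$ and $w$.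
   Context: Coherence parameters: $\mu_a=\max_{k\ne\ell}|\mathbf{a}_k^H\mathbf{a}_\ell|$, $\mu_b=\max_{k\ne\ell}|\mathbf{b}_k^H\mathbf{b}_\ell|$, $\mu_m=\max_{k,\ell}|\mathbf{a}_k^H\mathbf{b}_\ell|$, where $\mathbf{a}_k,\mathbf{b}_\ell$ are the columns of $\mathbf{A},\mathbf{B}$; $\mu_d$ equals the coherence $\max_{i\ne j}|\mathbf{d}_i^H\mathbf{d}_j|$ of $\mathbf{D}$. $\mathbf{w}_{\mathcal{S}}$ is $\mathbf{w}$ with entries outside $\mathcal{S}$ set to zero. $\mathrm{supp}_n(\mathbf{w})$ denotes an index set of size $n$ minimizing $\|\mathbf{w}-\mathbf{w}_{\tilde{\mathcal{W}}}\|_1$ over all index sets $\tilde{\mathcal W}$ of size $n$. *)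

(* Complex field rendered as an arbitrary numClosedFieldType C
   (e.g. algC; any algebraically closed field with conjugation and norm). *)
From HB Require Import structures.
From mathcomp Require Import all_boot all_order all_algebra.
Set Implicit Arguments. Unset Strict Implicit. Unset Printing Implicit Defensive.
Import Order.TTheory GRing.Theory Num.Theory.
Local Open Scope ring_scope.

Section Defs.
Variable C : numClosedFieldType.

Definition l2norm (n : nat) (v : 'cV[C]_n) : C :=
  sqrtC (\sum_(i < n) `|v i 0| ^+ 2).
Definition l1norm (n : nat) (v : 'cV[C]_n) : C := \sum_(i < n) `|v i 0|.

Definition colinner (M p q : nat) (P : 'M[C]_(M, p)) (Q : 'M[C]_(M, q))
  (k : 'I_p) (l : 'I_q) : C := \sum_(i < M) (P i k)^* * Q i l.

Definition unit_cols (M p : nat) (P : 'M[C]_(M, p)) : Prop :=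
  forall k : 'I_p, \sum_(i < M) `|P i k| ^+ 2 = 1.

(* mu_a = max_{k <> l} |a_k^H a_l|  (0 if there is no such pair) *)
Definition mu_self (M p : nat) (P : 'M[C]_(M, p)) : C :=
  \big[Num.max/0]_(k < p) \big[Num.max/0]_(l < p | l != k) `|colinner P P k l|.

Definition mu_mutual (M p q : nat) (P : 'M[C]_(M, p)) (Q : 'M[C]_(M, q)) : C :=
  \big[Num.max/0]_(k < p) \big[Num.max/0]_(l < q) `|colinner P Q k l|.

Definition restrict (n : nat) (v : 'cV[C]_n) (S : {set 'I_n}) : 'cV[C]_n :=
  \col_i (if i \in S then v i 0 else 0).

Definition is_supp (n : nat) (s : nat) (v : 'cV[C]_n) (S : {set 'I_n}) : Prop :=
  #|S| = s /\
  forall S' : {set 'I_n}, #|S'| = s -> l1norm (v - restrict v S) <= l1norm (v - restrict v S').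

End Defs.

(* Let h = w - what be the recovery error, W the chosen support of size s,
   delta = eps + eta and sigma = ||w - w_W||_1 the mass of w off W.
   - Correlating D h with each unit column d_j (Cauchy-Schwarz) gives the
     coordinate inequality |h_j| <= delta + sum_{k<>j} |d_j^H d_k| |h_k|, and
     the coherences of A, B bound |d_j^H d_k| by mu_a inside a block and by
     mu_m across blocks (coord_bound, colinner_row_mx).
   - l1 optimality of what gives the cone constraint
     ||h off W||_1 <= ||h on W||_1 + 2 sigma (cone_condition).
   - Summing the coordinate inequality over W bounds ||h on W||_1 by a multiple
     of delta + 2 mu_d sigma, either with the uniform coherence mu_d
     (uniform_head_bound) or by solving a 2x2 system for the parts of W in the
     two blocks (two_block_bound, block_head_bound); the paper's sparsity
     condition guarantees one of the two gaps is positive (sparsity_condition).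
   - Finally ||h||_2 <= ||h||_1 <= 2 ||h on W||_1 + 2 sigma (l2_error_bound). *)

From HB Require Import structures.
From mathcomp Require Import all_boot all_order all_algebra ring.
Import Order.TTheory GRing.Theory Num.Theory.
Local Open Scope ring_scope.

Ltac le_by_ring := rewrite le_eqVlt; apply/orP; left; apply/eqP; ring.

(* On a numDomainType the order is partial, so Num.max is only well behaved on
   comparable (e.g. nonnegative) arguments; the coherence parameters are
   maxima of nonnegative numbers. *)
Section NonnegMax.
Context {R : numDomainType}.

Lemma le_max_nonneg {x y : R} : 0 <= x -> 0 <= y ->
  x <= Num.max x y /\ y <= Num.max x y.
Proof.
move=> x0 y0; have cxy : x >=< y by rewrite real_comparable ?ger0_real.
by rewrite !comparable_le_max // !lexx ?orbT.
Qed.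

Lemma bigmax_ge0 {I : Type} (r : seq I) {P : pred I} {F : I -> R} :
  (forall i, P i -> 0 <= F i) -> 0 <= \big[Num.max/0]_(i <- r | P i) F i.
Proof.
move=> F0; elim/big_ind: _ => // x y x0 y0.
exact: le_trans x0 (le_max_nonneg x0 y0).1.
Qed.

Lemma le_bigmax_nonneg {I : finType} {P : pred I} (F : I -> R) (i0 : I) :
  (forall i, P i -> 0 <= F i) -> P i0 -> F i0 <= \big[Num.max/0]_(i | P i) F i.
Proof.
move=> F0 Pi0; have : i0 \in index_enum I by rewrite mem_index_enum.
elim: (index_enum I) => // j r IHr; rewrite inE big_cons.
have r0 := bigmax_ge0 r F0.
case/orP => [/eqP <-|/IHr le_i0r].
  by rewrite Pi0; exact: (le_max_nonneg (F0 _ Pi0) r0).1.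
case: ifP => // Pj; exact: le_trans le_i0r (le_max_nonneg (F0 _ Pj) r0).2.
Qed.

End NonnegMax.

Definition blockmu {R : numDomainType} {N : nat} (SA : {set 'I_N}) (ma mm : R)
    (j k : 'I_N) : R :=
  if (j \in SA) == (k \in SA) then ma else mm.

Section Coherence.
Context {C : numClosedFieldType} {M Na Nb : nat}.
Variables (A : 'M[C]_(M, Na)) (B : 'M[C]_(M, Nb)).

Lemma mu_self_ge0 {p : nat} (P : 'M[C]_(M, p)) : 0 <= mu_self P.
Proof. by apply: bigmax_ge0 => k _; apply: bigmax_ge0. Qed.

Lemma le_mu_self {p : nat} (P : 'M[C]_(M, p)) (k l : 'I_p) :
  l != k -> `|colinner P P k l| <= mu_self P.
Proof.
move=> lk; apply: le_trans (le_bigmax_nonneg (P := xpredT)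
  (fun k => \big[Num.max/0]_(l < p | l != k) `|colinner P P k l|) k _ _) => //.
- exact: le_bigmax_nonneg.
- by move=> i _; apply: bigmax_ge0.
Qed.

Lemma mu_mutual_ge0 : 0 <= mu_mutual A B.
Proof. by apply: bigmax_ge0 => k _; apply: bigmax_ge0. Qed.

Lemma le_mu_mutual k l : `|colinner A B k l| <= mu_mutual A B.
Proof.
apply: le_trans (le_bigmax_nonneg (P := xpredT)
  (fun k => \big[Num.max/0]_(l < Nb) `|colinner A B k l|) k _ _) => //.
- exact: le_bigmax_nonneg.
- by move=> i _; apply: bigmax_ge0.
Qed.

Lemma unit_cols_row_mx : unit_cols A -> unit_cols B -> unit_cols (row_mx A B).
Proof.
move=> uA uB j; case: (split_ordP j) => a ->.
  by rewrite -(uA a); apply: eq_bigr => i _; rewrite row_mxEl.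
by rewrite -(uB a); apply: eq_bigr => i _; rewrite row_mxEr.
Qed.

Lemma colinner_row_mx (j k : 'I_(Na + Nb)) :
  j != k -> mu_self B <= mu_self A ->
  `|colinner (row_mx A B) (row_mx A B) j k| <=
    blockmu [set i : 'I_(Na + Nb) | (i < Na)%N] (mu_self A) (mu_mutual A B) j k.
Proof.
rewrite /blockmu !inE => + leBA.
case: (split_ordP j) => a ->; case: (split_ordP k) => b -> /= jk.
- have -> : colinner (row_mx A B) (row_mx A B) (lshift Nb a) (lshift Nb b)
      = colinner A A a b by apply: eq_bigr => i _; rewrite !row_mxEl.
  by apply: le_mu_self; apply: contraNneq jk => ->.
- have -> : colinner (row_mx A B) (row_mx A B) (lshift Nb a) (rshift Na b)
      = colinner A B a b by apply: eq_bigr => i _; rewrite row_mxEl row_mxEr.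
  exact: le_mu_mutual.
- have -> : colinner (row_mx A B) (row_mx A B) (rshift Na a) (lshift Nb b)
      = (colinner A B b a)^*.
    rewrite /colinner rmorph_sum; apply: eq_bigr => i _.
    by rewrite row_mxEl row_mxEr rmorphM /= conjCK mulrC.
  by rewrite norm_conjC le_mu_mutual.
- have -> : colinner (row_mx A B) (row_mx A B) (rshift Na a) (rshift Na b)
      = colinner B B a b by apply: eq_bigr => i _; rewrite !row_mxEr.
  by apply: le_trans leBA; apply: le_mu_self; apply: contraNneq jk => ->.
Qed.

End Coherence.

Arguments unit_cols_row_mx {C M Na Nb A B}.
Arguments colinner_row_mx {C M Na Nb A B j k}.

Lemma dictionary_coherence_bounds {C : numClosedFieldType} {ma mb mm : C} :
  0 <= ma -> 0 <= mb -> 0 <= mm -> mb <= ma ->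
  let md := Num.max ma (Num.max mb mm) in
  [/\ ma <= md, mm <= md & md <= sqrtC (ma ^+ 2 + mm ^+ 2)].
Proof.
move=> ma0 mb0 mm0 mb_ma md.
have [mb_bm mm_bm] := le_max_nonneg mb0 mm0.
have bm0 := le_trans mb0 mb_bm.
have [ma_md bm_md] := le_max_nonneg ma0 bm0.
have le_sqrt (u v : C) : 0 <= u -> 0 <= v -> u <= sqrtC (u ^+ 2 + v ^+ 2).
  move=> u0 v0; rewrite -{1}(sqrCK u0) ler_sqrtC ?nnegrE ?addr_ge0 ?exprn_ge0 //.
  by rewrite lerDl exprn_ge0.
have ma_r := le_sqrt _ _ ma0 mm0.
have mm_r : mm <= sqrtC (ma ^+ 2 + mm ^+ 2) by rewrite addrC le_sqrt.
split; [exact: ma_md | exact: le_trans mm_bm bm_md |].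
have cmp : mb >=< mm by rewrite real_comparable ?ger0_real.
have cmp' : ma >=< Num.max mb mm by rewrite real_comparable ?ger0_real.
by rewrite /md !comparable_ge_max // ma_r mm_r (le_trans mb_ma ma_r).
Qed.

Definition l1_on {R : numDomainType} {n : nat} (v : 'cV[R]_n) (S : {set 'I_n}) : R :=
  \sum_(i in S) `|v i 0|.

Lemma l1_on_ge0 {R : numDomainType} {n} (v : 'cV[R]_n) S : 0 <= l1_on v S.
Proof. exact: sumr_ge0. Qed.

Lemma l1_on_split {R : numDomainType} {n} (v : 'cV[R]_n) S :
  \sum_i `|v i 0| = l1_on v S + l1_on v (~: S).
Proof.
rewrite (bigID (mem S)) /=; congr (_ + _).
by apply: eq_bigl => i; rewrite inE.
Qed.

Section Norms.
Context {C : numClosedFieldType}.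

Lemma l1norm_split {n} (v : 'cV[C]_n) S : l1norm v = l1_on v S + l1_on v (~: S).
Proof. exact: l1_on_split. Qed.

Lemma l1_off_restrict {n} (v : 'cV[C]_n) S :
  l1norm (v - restrict v S) = l1_on v (~: S).
Proof.
rewrite (l1norm_split _ S) /l1_on big1 ?add0r => [|i iS]; last first.
  by rewrite !mxE iS subrr normr0.
by apply: eq_bigr => i; rewrite inE !mxE => /negbTE ->; rewrite subr0.
Qed.

Lemma l2norm_ge0 {n} (v : 'cV[C]_n) : 0 <= l2norm v.
Proof. by rewrite sqrtC_ge0 sumr_ge0 // => i _; apply: exprn_ge0. Qed.

(* ||v||_2 <= ||v||_1 since ||v||_1^2 dominates the diagonal terms |v_i|^2. *)
Lemma l2_le_l1 {n} (v : 'cV[C]_n) : l2norm v <= l1norm v.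
Proof.
have l1_0 : 0 <= l1norm v by apply: sumr_ge0.
rewrite /l2norm -(sqrCK l1_0) ler_sqrtC ?nnegrE ?exprn_ge0 //; last first.
  by apply: sumr_ge0 => i _; apply: exprn_ge0.
rewrite expr2 mulr_suml; apply: ler_sum => i _.
rewrite expr2 ler_wpM2l // /l1norm (bigD1 i) //= lerDl.
exact: sumr_ge0.
Qed.

Lemma cauchy_schwarz_unit m (a b : 'I_m -> C) :
  \sum_i `|a i| ^+ 2 = 1 ->
  `|\sum_i (a i)^* * b i| <= sqrtC (\sum_i `|b i| ^+ 2).
Proof.
move=> a1; set S := sqrtC _.
have b2_0 : 0 <= \sum_i `|b i| ^+ 2 by apply: sumr_ge0 => i _; apply: exprn_ge0.
have S2 : S ^+ 2 = \sum_i `|b i| ^+ 2 by rewrite sqrtCK.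
apply: le_trans (ler_norm_sum _ _ _) _.
under eq_bigr => i _ do rewrite normrM norm_conjC.
have [S0|S_neq0] := eqVneq S 0.
  rewrite big1 ?S0 // => i _; suff -> : `|b i| = 0 by rewrite mulr0.
  have b2_sum0 : \sum_i `|b i| ^+ 2 = 0 by rewrite -S2 S0 expr0n.
  have b0 := psumr_eq0P (fun j _ => exprn_ge0 2 (normr_ge0 (b j))) b2_sum0.
  have /eqP := @b0 i isT.
  by rewrite expf_eq0 /= => /eqP.
have S_gt0 : 0 < S by rewrite lt_def S_neq0 sqrtC_ge0.
(* 2 S |a_i| |b_i| <= S^2 |a_i|^2 + |b_i|^2, summed over i *)
have amgm i : 2 * S * (`|a i| * `|b i|) <= S ^+ 2 * `|a i| ^+ 2 + `|b i| ^+ 2.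
  rewrite -subr_ge0 (_ : _ - _ = (S * `|a i| - `|b i|) ^+ 2); last by ring.
  by rewrite -real_normK ?exprn_ge0 // realB ?ger0_real ?mulr_ge0 // ltW.
rewrite -(@ler_pM2l _ (2 * S)) ?mulr_gt0 // mulr_sumr.
apply: le_trans (ler_sum _ (fun i _ => amgm i)) _.
by rewrite big_split /= -mulr_sumr a1 mulr1 -S2; le_by_ring.
Qed.

End Norms.

Section CoordinateBound.
Context {C : numClosedFieldType} {M N : nat} {D : 'M[C]_(M, N)}.
Hypothesis unitD : unit_cols D.

Lemma column_inner_mulmx (h : 'cV[C]_N) j :
  \sum_i (D i j)^* * (D *m h) i 0 = h j 0 + \sum_(k | k != j) colinner D D j k * h k 0.
Proof.
under eq_bigr => i _ do rewrite mxE mulr_sumr.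
rewrite exchange_big /= (bigD1 j) //=; congr (_ + _).
  under eq_bigr => i _ do rewrite mulrA.
  rewrite -mulr_suml (_ : \sum_i _ = 1) ?mul1r //.
  by rewrite -(unitD j); apply: eq_bigr => i _; rewrite normCKC.
apply: eq_bigr => k _; rewrite /colinner mulr_suml.
by apply: eq_bigr => i _; rewrite mulrA.
Qed.

Lemma column_inner_bound (r : 'cV[C]_M) j :
  `|\sum_i (D i j)^* * r i 0| <= l2norm r.
Proof. exact: cauchy_schwarz_unit. Qed.

Lemma coord_bound {mu : 'I_N -> 'I_N -> C} {h : 'cV[C]_N} {r1 r2 : 'cV[C]_M}
    {eps eta : C} :
  (forall j k, j != k -> `|colinner D D j k| <= mu j k) ->
  D *m h = r1 - r2 -> l2norm r1 <= eta -> l2norm r2 <= eps ->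
  forall j, `|h j 0| <= (eps + eta) + \sum_(k | k != j) mu j k * `|h k 0|.
Proof.
move=> le_mu Dh r1_eta r2_eps j.
have -> : h j 0 = \sum_i (D i j)^* * (D *m h) i 0
                  - \sum_(k | k != j) colinner D D j k * h k 0.
  by rewrite column_inner_mulmx addrK.
apply: le_trans (ler_normB _ _) _; apply: lerD.
  rewrite Dh (_ : \sum_i _ = \sum_i (D i j)^* * r1 i 0 - \sum_i (D i j)^* * r2 i 0).
    apply: le_trans (ler_normB _ _) _; rewrite [eps + eta]addrC.
    by apply: lerD; apply: le_trans (column_inner_bound _ _) _.
  by rewrite -sumrB; apply: eq_bigr => i _; rewrite !mxE mulrBr.
apply: le_trans (ler_norm_sum _ _ _) _; apply: ler_sum => k kj.
by rewrite normrM ler_wpM2r // le_mu // eq_sym.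
Qed.

End CoordinateBound.

Lemma cone_condition {C : numClosedFieldType} {n} {w what : 'cV[C]_n} {S} :
  l1norm what <= l1norm w ->
  l1_on (w - what) (~: S) <= l1_on (w - what) S + 2 * l1_on w (~: S).
Proof.
move=> what_w.
have on_S : l1_on w S - l1_on (w - what) S <= l1_on what S.
  rewrite /l1_on -sumrB; apply: ler_sum => i _; rewrite !mxE lerBlDr.
  by have := ler_normD (what i 0) (w i 0 - what i 0); rewrite [_ + (_ - _)]addrC subrK.
have off_S : l1_on (w - what) (~: S) - l1_on w (~: S) <= l1_on what (~: S).
  rewrite /l1_on -sumrB; apply: ler_sum => i _; rewrite !mxE lerBlDl.
  exact: ler_normB.
rewrite (l1norm_split what S) (l1norm_split w S) in what_w.
have H := le_trans (lerD on_S off_S) what_w.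
rewrite -subr_ge0 in H; rewrite -subr_ge0.
by congr (0 <= _): H; ring.
Qed.

Section TwoBlockAlgebra.
Context {R : numDomainType}.

(* Elimination in the 2x2 system u x <= a g + a f y, v y <= b g + b f x. *)
Lemma cross_elimination (u v a b f g x y : R) :
  0 <= v + b * f -> 0 <= u + a * f ->
  u * x <= a * g + a * f * y -> v * y <= b * g + b * f * x ->
  (u * v - a * b * f ^+ 2) * (x + y) <= ((v + b * f) * a + (u + a * f) * b) * g.
Proof.
move=> wx wy hx hy; have H := lerD (ler_wpM2l wx hx) (ler_wpM2l wy hy).
rewrite -subr_ge0 in H; rewrite -subr_ge0.
by congr (0 <= _): H; ring.
Qed.

Lemma det_lower_bound (k : R) {e f a b : R} :
  0 <= e -> e <= f -> 0 <= a -> 0 <= b -> 4 * a * b <= (a + b) ^+ 2 ->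
  (a + b) * (e + f) <= 2 * k ->
  k * (2 * k - (a + b) * (e + f)) <= 2 * ((k - a * e) * (k - b * e) - a * b * f ^+ 2).
Proof.
move=> e0 ef a0 b0 ab gap; have ef0 : 0 <= e + f by rewrite addr_ge0 ?(le_trans e0).
have ab_k : 2 * a * b * (e + f) <= k * (a + b).
  rewrite -(@ler_pM2l _ 2) // (_ : 2 * _ = 4 * a * b * (e + f)); last by ring.
  apply: le_trans (ler_wpM2r ef0 ab) _.
  rewrite expr2 -mulrA mulrC (_ : 2 * _ = (2 * k) * (a + b)); last by ring.
  by rewrite ler_wpM2r ?addr_ge0 // mulrC.
rewrite -subr_ge0 (_ : _ - _ = (f - e) * (k * (a + b) - 2 * a * b * (e + f))).
  by rewrite mulr_ge0 // subr_ge0.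
by ring.
Qed.

Lemma two_block_bound (k e f g x y a b : R) :
  0 <= e -> e <= f -> 0 <= a -> 0 <= b -> 4 * a * b <= (a + b) ^+ 2 ->
  0 < 2 * k - (a + b) * (e + f) ->
  k * x <= a * (g + e * x + f * y) -> k * y <= b * (g + f * x + e * y) ->
  0 <= g -> 0 <= x -> 0 <= y ->
  k * (2 * k - (a + b) * (e + f)) * (x + y) <= 2 * ((a + b) * k + (a + b) ^+ 2 * f) * g.
Proof.
move=> e0 ef a0 b0 ab gap_pos hx hy g0 x0 y0.
have f0 := le_trans e0 ef.
have gap : (a + b) * (e + f) <= 2 * k by rewrite -subr_ge0 ltW.
have se_k : (a + b) * e <= k.
  rewrite -(@ler_pM2l _ 2) //; apply: le_trans gap.
  by rewrite mulrCA ler_wpM2l ?addr_ge0 // mulr_natl mulr2n lerD2l.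
have ae_k : a * e <= k by apply: le_trans se_k; rewrite ler_wpM2r // lerDl.
have be_k : b * e <= k by apply: le_trans se_k; rewrite ler_wpM2r // lerDr.
have elim : ((k - a * e) * (k - b * e) - a * b * f ^+ 2) * (x + y) <=
    ((k - b * e + b * f) * a + (k - a * e + a * f) * b) * g.
  apply: cross_elimination.
  - by rewrite addr_ge0 ?subr_ge0 ?mulr_ge0.
  - by rewrite addr_ge0 ?subr_ge0 ?mulr_ge0.
  - rewrite mulrBl lerBlDr; apply: le_trans hx _.
    by le_by_ring.
  - rewrite mulrBl lerBlDr; apply: le_trans hy _.
    by le_by_ring.
have numer : (k - b * e + b * f) * a + (k - a * e + a * f) * b <=
    (a + b) * k + (a + b) ^+ 2 * f.
  rewrite -subr_ge0 (_ : _ - _ = (a ^+ 2 + b ^+ 2) * f + 2 * a * b * e); last by ring.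
  by rewrite addr_ge0 ?mulr_ge0 ?addr_ge0 ?exprn_ge0.
apply: le_trans (ler_wpM2r (addr_ge0 x0 y0) (det_lower_bound k e0 ef a0 b0 ab gap)) _.
rewrite -[2 * _ * (x + y)]mulrA -[2 * _ * g]mulrA ler_wpM2l //.
by apply: le_trans elim _; rewrite ler_wpM2r.
Qed.

End TwoBlockAlgebra.

Section Constants.
Context {R : numFieldType}.
Implicit Types (ma md : R) (s : nat).

(* Slack in the two sparsity conditions; the paper's condition on w makes one
   of them positive. *)
Definition block_gap ma md s : R := 2 * (1 + ma) - s%:R * ((ma + md) + 2 * md).
Definition uniform_gap md s : R := 1 + md - s%:R * (2 * md).

Definition block_cond ma md s : bool := [&& 0 < block_gap ma md s, 0 <= ma & 0 <= md].
Definition uniform_cond md s : bool := (0 < uniform_gap md s) && (0 <= md).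

Definition block_const ma md s : R :=
  2 * (s%:R * (1 + ma) + s%:R ^+ 2 * (2 * md)) / ((1 + ma) * block_gap ma md s).
Definition uniform_const md s : R := s%:R / uniform_gap md s.

(* Bound on the error mass on the support, relative to delta + 2 mu_d sigma:
   each sparsity condition that holds contributes its constant. *)
Definition head_const ma md s : R :=
  (if block_cond ma md s then block_const ma md s else 0)
  + (if uniform_cond md s then uniform_const md s else 0).

Lemma block_const_ge0 ma md s : block_cond ma md s -> 0 <= block_const ma md s.
Proof.
case/and3P => gap0 ma0 md0; have k0 : 0 < 1 + ma by rewrite ltr_pwDl.
apply: divr_ge0; last by rewrite mulr_ge0 ?ltW.
by rewrite mulr_ge0 ?addr_ge0 ?mulr_ge0 ?exprn_ge0 // ltW.
Qed.

Lemma uniform_const_ge0 md s : uniform_cond md s -> 0 <= uniform_const md s.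
Proof. by case/andP => gap0 _; rewrite divr_ge0 // ltW. Qed.

Lemma head_const_ge0 ma md s : 0 <= head_const ma md s.
Proof.
rewrite /head_const addr_ge0 //; case: ifP => // cond.
  exact: block_const_ge0.
exact: uniform_const_ge0.
Qed.

Lemma head_const_block ma md s (P g : R) :
  block_cond ma md s -> 0 <= g ->
  (1 + ma) * block_gap ma md s * P <= 2 * (s%:R * (1 + ma) + s%:R ^+ 2 * (2 * md)) * g ->
  P <= head_const ma md s * g.
Proof.
move=> cond g0 le_P; have /and3P[gap0 ma0 _] := cond.
have den0 : 0 < (1 + ma) * block_gap ma md s by rewrite mulr_gt0 // ltr_pwDl.
rewrite /head_const cond mulrDl -[P]addr0 lerD //; last first.
  by case: ifP => // ucond; rewrite mulr_ge0 ?uniform_const_ge0.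
by rewrite /block_const mulrAC ler_pdivlMr // mulrC.
Qed.

Lemma head_const_uniform ma md s (P g : R) :
  uniform_cond md s -> 0 <= g ->
  uniform_gap md s * P <= s%:R * g ->
  P <= head_const ma md s * g.
Proof.
move=> cond g0 le_P; have /andP[gap0 _] := cond.
rewrite /head_const cond mulrDl -[P]add0r lerD //; last first.
  by rewrite /uniform_const mulrAC ler_pdivlMr // mulrC.
by case: ifP => // bcond; rewrite mulr_ge0 ?block_const_ge0.
Qed.

End Constants.

Section HeadBound.
Context {R : numFieldType} {N : nat}.
Context {SA W : {set 'I_N}} {ma mm md delta sig : R} {h : 'cV[R]_N} {s : nat}.
Hypotheses (ma0 : 0 <= ma) (ma_md : ma <= md) (mm_md : mm <= md).
Hypotheses (delta0 : 0 <= delta) (sig0 : 0 <= sig) (cardW : #|W| = s).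
Hypothesis coord : forall j,
  `|h j 0| <= delta + \sum_(k | k != j) blockmu SA ma mm j k * `|h k 0|.
Hypothesis cone : l1_on h (~: W) <= l1_on h W + 2 * sig.

Let gam := delta + 2 * md * sig.

Lemma blockmu_le_md j k : blockmu SA ma mm j k <= md.
Proof. by rewrite /blockmu; case: ifP. Qed.

Lemma blockmu_sum j (T : {set 'I_N}) (b : bool) :
  (forall k, k \in T -> (k \in SA) = b) ->
  \sum_(k in T) blockmu SA ma mm j k * `|h k 0| =
    (if (j \in SA) == b then ma else mm) * l1_on h T.
Proof.
move=> Tb; rewrite /l1_on mulr_sumr; apply: eq_bigr => k kT.
by rewrite /blockmu (Tb k kT).
Qed.

(* Using only the uniform coherence bound mu_d: summing
   (1 + mu_d) |h_j| <= delta + mu_d ||h||_1 over W and applying the cone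
   constraint. *)
Lemma uniform_head_bound : uniform_gap md s * l1_on h W <= s%:R * gam.
Proof.
have md0 := le_trans ma0 ma_md.
have row j : (1 + md) * `|h j 0| <= delta + md * (l1_on h W + l1_on h (~: W)).
  rewrite -l1_on_split (bigD1 j) //= mulrDr addrA mulrDl mul1r.
  rewrite [X in _ <= X]addrAC lerD2r.
  apply: le_trans (coord j) _; rewrite lerD2l mulr_sumr.
  by apply: ler_sum => k _; rewrite ler_wpM2r // blockmu_le_md.
have sumW : (1 + md) * l1_on h W <= s%:R * (delta + md * (2 * l1_on h W + 2 * sig)).
  rewrite /l1_on mulr_sumr; apply: le_trans (ler_sum _ (fun j _ => row j)) _.
  rewrite sumr_const cardW mulr_natl -/(l1_on h W) ler_wMn2r ?lerD2l //.
  by rewrite ler_wpM2l // mulr2n mulrDl mul1r -addrA lerD2l.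
rewrite -subr_ge0 in sumW; rewrite -subr_ge0.
by congr (0 <= _): sumW; rewrite /uniform_gap /gam; ring.
Qed.

Let x := l1_on h (W :&: SA).
Let y := l1_on h (W :\: SA).

(* Row bound at a support index j: its own block enters with weight mu_a, the
   other block and (through the cone constraint) the off-support mass with mu_d. *)
Lemma block_row_bound j : j \in W ->
  (1 + ma) * `|h j 0| <=
    gam + (if j \in SA then (ma + md) * x + 2 * md * y else 2 * md * x + (ma + md) * y).
Proof.
move=> jW; have md0 := le_trans ma0 ma_md.
have diag : (1 + ma) * `|h j 0| <= delta + \sum_k blockmu SA ma mm j k * `|h k 0|.
  have bjj : blockmu SA ma mm j j = ma by rewrite /blockmu eqxx.
  rewrite (bigD1 j) //= bjj mulrDl mul1r [X in X <= _]addrC [X in _ <= X]addrCA lerD2l.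
  exact: coord.
have tail : \sum_(k | k \notin W) blockmu SA ma mm j k * `|h k 0| <= md * (x + y + 2 * sig).
  apply: le_trans (_ : _ <= md * l1_on h (~: W)) _.
    rewrite /l1_on mulr_sumr (eq_bigl (fun k => k \in ~: W)) => [|k]; last by rewrite inE.
    by apply: ler_sum => k _; rewrite ler_wpM2r // blockmu_le_md.
  by rewrite ler_wpM2l // -(big_setID SA).
apply: le_trans diag _; rewrite (bigID (mem W)) /= (big_setID SA) /=.
rewrite (blockmu_sum j (W :&: SA) true) => [|k]; last by rewrite inE => /andP[].
rewrite (blockmu_sum j (W :\: SA) false) => [|k]; last by rewrite inE => /andP[/negbTE].
have mmx := ler_wpM2r (l1_on_ge0 h (W :&: SA)) mm_md.
have mmy := ler_wpM2r (l1_on_ge0 h (W :\: SA)) mm_md.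
case: (j \in SA) => /=.
- apply: le_trans (lerD (lexx _) (lerD (lerD (lexx _) mmy) tail)) _.
  by rewrite /gam /x /y; le_by_ring.
- apply: le_trans (lerD (lexx _) (lerD (lerD mmx (lexx _)) tail)) _.
  by rewrite /gam /x /y; le_by_ring.
Qed.

(* Summing the row bounds over the two parts of the support gives the 2x2
   system solved by two_block_bound. *)
Lemma block_head_bound : 0 < block_gap ma md s ->
  (1 + ma) * block_gap ma md s * l1_on h W <=
    2 * (s%:R * (1 + ma) + s%:R ^+ 2 * (2 * md)) * gam.
Proof.
move=> gap0; have md0 := le_trans ma0 ma_md.
set na := #|W :&: SA|; set nb := #|W :\: SA|.
have s_nab : s%:R = na%:R + nb%:R :> R by rewrite -natrD cardsID cardW.
have sum_rows (T : {set 'I_N}) c :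
    (forall j, j \in T -> (1 + ma) * `|h j 0| <= c) -> (1 + ma) * l1_on h T <= #|T|%:R * c.
  move=> le_c; rewrite /l1_on mulr_sumr; apply: le_trans (ler_sum _ le_c) _.
  by rewrite sumr_const mulr_natl.
have hx : (1 + ma) * x <= na%:R * (gam + (ma + md) * x + 2 * md * y).
  apply: sum_rows => j; rewrite inE => /andP[jW jSA].
  by have := block_row_bound _ jW; rewrite jSA addrA.
have hy : (1 + ma) * y <= nb%:R * (gam + 2 * md * x + (ma + md) * y).
  apply: sum_rows => j; rewrite inE => /andP[jSA jW].
  by have := block_row_bound _ jW; rewrite (negbTE jSA) addrA.
rewrite /l1_on (big_setID SA) /= -/x -/y /block_gap s_nab.
apply: two_block_bound hx hy _ _ _ => //.
- by rewrite addr_ge0.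
- by rewrite mulr_natl mulr2n lerD2r.
- rewrite -subr_ge0 (_ : _ - _ = (na%:R - nb%:R : R) ^+ 2); last by ring.
  by rewrite -real_normK ?exprn_ge0 // realB ?ger0_real.
- by rewrite -s_nab.
- by rewrite /gam addr_ge0 ?mulr_ge0.
- exact: l1_on_ge0.
- exact: l1_on_ge0.
Qed.

Lemma head_bound : block_cond ma md s \/ uniform_cond md s ->
  l1_on h W <= head_const ma md s * gam.
Proof.
have gam0 : 0 <= gam by rewrite /gam addr_ge0 ?mulr_ge0 ?(le_trans ma0 ma_md).
case=> cond.
- apply: head_const_block => //; apply: block_head_bound.
  by case/and3P: cond.
- by apply: head_const_uniform => //; apply: uniform_head_bound.
Qed.

End HeadBound.

(* From the support-mass bound and the cone constraint to the l2 error: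
   ||h||_2 <= ||h||_1 <= 2 ||h_W||_1 + 2 sigma. *)
Lemma l2_error_bound {C : numClosedFieldType} {n} (h w : 'cV[C]_n) W (K md delta : C) :
  l1_on h (~: W) <= l1_on h W + 2 * l1_on w (~: W) ->
  l1_on h W <= K * (delta + 2 * md * l1_on w (~: W)) ->
  l2norm h <= 2 * K * delta + (4 * K * md + 2) * l1_on w (~: W).
Proof.
move=> cone head; apply: le_trans (l2_le_l1 h) _.
rewrite (l1norm_split h W); apply: le_trans (lerD (lexx _) cone) _.
apply: le_trans (_ : _ <= 2 * (K * (delta + 2 * md * l1_on w (~: W))) + 2 * l1_on w (~: W)) _.
  by rewrite addrA -mulr2n -(mulr_natl (l1_on h W) 2) lerD2r ler_pM2l.
by le_by_ring.
Qed.

Lemma sparsity_condition {C : numClosedFieldType} {ma mm md : C} {s : nat} :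
  0 <= ma -> ma <= md -> md <= sqrtC (ma ^+ 2 + mm ^+ 2) ->
  s%:R * (ma + 2 * md + sqrtC (ma ^+ 2 + mm ^+ 2)) < 2 * (1 + ma)
    \/ s%:R * (2 * md) < 1 + md ->
  block_cond ma md s \/ uniform_cond md s.
Proof.
move=> ma0 ma_md md_sqrt; have md0 := le_trans ma0 ma_md.
case=> cond; [left | right].
- rewrite /block_cond /block_gap ma0 md0 subr_gt0 /= andbT.
  apply: le_lt_trans _ cond; rewrite ler_wpM2l // -addrA [md + _]addrC addrA.
  by rewrite lerD2l.
- by rewrite /uniform_cond /uniform_gap subr_gt0 cond md0.
Qed.

(* Theorem 4.  C7 = 2 K and C8 = 4 K mu_d + 2 with K = head_const mu_a mu_d s
   (mu_d is replaced by 0 when negative, which never happens for coherences,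
   only to make C8 nonnegative for arbitrary arguments). *)
Theorem theorem4 (C : numClosedFieldType) :
  exists C7 C8 : C -> C -> C -> C -> nat -> C,
    (forall (ma mb mm md : C) (s : nat), 0 <= C7 ma mb mm md s /\ 0 <= C8 ma mb mm md s) /\
    forall (M Na Nb : nat) (A : 'M[C]_(M, Na)) (B : 'M[C]_(M, Nb)),
      unit_cols A -> unit_cols B ->
      let D := row_mx A B in
      let mua := mu_self A in
      let mub := mu_self B in
      let mum := mu_mutual A B in
      let mud := Num.max mua (Num.max mub mum) in
      mub <= mua ->
      forall (w : 'cV[C]_(Na + Nb)) (n : 'cV[C]_M) (eps : C),
        l2norm n <= eps ->
        let z := D *m w + n in
        forall (s : nat) (W : {set 'I_(Na + Nb)}),
          (0 < s)%N ->
          is_supp s w W ->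
          (s%:R * (mua + 2 * mud + sqrtC (mua ^+ 2 + mum ^+ 2)) < 2 * (1 + mua)
           \/ s%:R * (2 * mud) < 1 + mud) ->
          forall (eta : C), eps <= eta ->
          forall (what : 'cV[C]_(Na + Nb)),
            l2norm (z - D *m what) <= eta ->
            (forall wt : 'cV[C]_(Na + Nb),
                l2norm (z - D *m wt) <= eta -> l1norm what <= l1norm wt) ->
            l2norm (w - what) <=
              C7 mua mub mum mud s * (eps + eta)
              + C8 mua mub mum mud s * l1norm (w - restrict w W).
Proof.
exists (fun ma _ _ md s => 2 * head_const ma md s).
exists (fun ma _ _ md s => 4 * head_const ma md s * (if 0 <= md then md else 0) + 2).
split=> [ma mb mm md s|].
  rewrite mulr_ge0 ?head_const_ge0 // addr_ge0 // mulr_ge0 ?mulr_ge0 ?head_const_ge0 //.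
  by case: ifP.
move=> M Na Nb A B unitA unitB D mua mub mum mud mub_mua w n eps n_eps z s W _
  [cardW _] sparse eta eps_eta what what_feas what_min.
have mua0 := mu_self_ge0 A; have mum0 := mu_mutual_ge0 A B.
have [mua_mud mum_mud mud_sqrt] :=
  dictionary_coherence_bounds mua0 (mu_self_ge0 B) mum0 mub_mua.
have mud0 : 0 <= mud := le_trans mua0 mua_mud.
have w_feas : l2norm (z - D *m w) <= eta by rewrite /z addrAC subrr add0r (le_trans n_eps).
have Dh : D *m (w - what) = (z - D *m what) - n by rewrite mulmxBr /z addrAC addrK.
have coord := coord_bound (unit_cols_row_mx unitA unitB)
  (fun j k jk => colinner_row_mx jk mub_mua) Dh what_feas n_eps.
have eps0 := le_trans (l2norm_ge0 n) n_eps.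
have cone := cone_condition (S := W) (what_min w w_feas).
have head := head_bound mua0 mua_mud mum_mud (addr_ge0 eps0 (le_trans eps0 eps_eta))
  (l1_on_ge0 w (~: W)) cardW coord cone (sparsity_condition mua0 mua_mud mud_sqrt sparse).
by rewrite mud0 l1_off_restrict; apply: l2_error_bound cone head.
Qed.
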